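(* Let $q=(q_1,q_2,q_3)\in K^3$. Define the linear map $\Gamma_q:\mathcal{H}_{\mathbb{T}}\to\mathbf{WQSym}$ by, for $\mathcal{T}\in\mathbb{T}_n$, $$\Gamma_q(\mathcal{T})=\sum_{f\in\mathcal{P}(\mathcal{T})}q_1^{\ell_1(f)}q_2^{\ell_2(f)}q_3^{\ell_3(f)}\,f(1)\ldots f(n).$$ Then $\Gamma_q$ is a homogeneous surjective Hopf algebra morphism from $(\mathcal{H}_{\mathbb{T}},.,\Delta)$ to $(\mathbf{WQSym},.,\Delta)$. Moreover $j\circ\Gamma_{(q_2,q_1,q_3)}=\Gamma_{(q_1,q_2,q_3)}\circ\iota$.
   Context: Let $K$ be a field; convention $0^0=1$. For $n\geq0$, $[n]=\{1,\ldots,n\}$, $\mathbb{T}_n$ is the set of topologies on $[n]$, $\mathcal{H}_{\mathbb{T}}$ the $K$-vector space with basis $\bigsqcup_n\mathbb{T}_n$, graded by $n$. For a topology $\mathcal{T}$ on finite $X$: $i\leq_{\mathcal{T}}j$ iff every open set containing $i$ contains $j$; $i\sim_{\mathcal{T}}j$ iff $i\leq_{\mathcal{T}}j$ and $j\leq_{\mathcal{T}}i$; $i<_{\mathcal{T}}j$ iff $i\leq_{\mathcal{T}}j$ and not $j\leq_{\mathcal{T}}i$. $\mathcal{T}_{\mid Y}=\{O\cap Y\mid O\in\mathcal{T}\}$; for $X$ totally ordered of size $m$, $\mathrm{Std}(\mathcal{T})\in\mathbb{T}_m$ is the transport along the increasing bijection $X\to[m]$. Product on $\mathcal{H}_{\mathbb{T}}$: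 $\mathcal{T}.\mathcal{T}'$ ($\mathcal{T}\in\mathbb{T}_n,\mathcal{T}'\in\mathbb{T}_{n'}$) is the topology on $[n+n']$ with open sets $O\sqcup\{k+n\mid k\in O'\}$, $O\in\mathcal{T},O'\in\mathcal{T}'$; coproduct $\Delta(\mathcal{T})=\sum_{O\in\mathcal{T}}\mathrm{Std}(\mathcal{T}_{\mid[n]\setminus O})\otimes\mathrm{Std}(\mathcal{T}_{\mid O})$; $\iota(\mathcal{T})=\{X\setminus O\mid O\in\mathcal{T}\}$. $\mathbf{WQSym}$: a packed word of length $n$ is a word $f=f(1)\ldots f(n)$ of positive integers with $\{f(1),\ldots,f(n)\}=[\max f]$ (the empty word has $\max=0$). For a word $w$ of positive integers, $\mathrm{Pack}(w)$ is obtained by applying the unique increasing bijection from its set of letters onto some $[m]$; $w_{\mid I}$ is the subword of letters lying in $I$. $\mathbf{WQSym}$ has basis the packed words, product $f.f'=\sum f''$ over packed words $f''$ of length $n+n'$ with $\mathrm{Pack}(f''(1)\ldots f''(n))=f$ and $\mathrm{Pack}(f''(n+1)\ldots f''(n+n'))=f'$ ($n,n'$ the lengths of $f,f'$), and coproduct $\Delta(f)=\sum_{k=0}^{\max f}f_{\mid[k]}\otimes\mathrm{Pack}(f_{\mid\mathbb{N}_{>0}\setminus[k]})$; it is a graded (by length) Hopf algebra. $j$ is the linear involution sending a packed word $f$ to the word $(\max f+1-f(1))\ldots(\max f+1-f(n))$. A generalized T-partition of $\mathcal{T}\in\mathbb{T}_n$ is a surjection $f:[n]\to[p]$ (some $p\ge0$)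 such that $i\leq_{\mathcal{T}}j\Rightarrow f(i)\leq f(j)$, identified with the packed word $f(1)\ldots f(n)$; $\mathcal{P}(\mathcal{T})$ is their set. For $f\in\mathcal{P}(\mathcal{T})$: $\ell_1(f)=\sharp\{(i,j)\mid i<_{\mathcal{T}}j,\ i<j,\ f(i)=f(j)\}$; $\ell_2(f)=\sharp\{(i,j)\mid i<_{\mathcal{T}}j,\ i>j,\ f(i)=f(j)\}$; $\ell_3(f)=\sharp\{(i,j,k)\mid i<j<k,\ i\sim_{\mathcal{T}}k,\ \text{not } i\sim_{\mathcal{T}}j,\ \text{not } j\sim_{\mathcal{T}}k,\ f(i)=f(j)=f(k)\}$. *)

From HB Require Import structures.
From mathcomp Require Import all_boot all_order all_algebra.
Set Implicit Arguments. Unset Strict Implicit. Unset Printing Implicit Defensive.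
Import GRing.Theory.
Local Open Scope ring_scope.

Definition is_topology (n : nat) (T : {set {set 'I_n}}) : bool :=
  [&& set0 \in T, setT \in T,
      [forall O1 in T, forall O2 in T, (O1 :|: O2) \in T] &
      [forall O1 in T, forall O2 in T, (O1 :&: O2) \in T]].

Definition leT (n : nat) (T : {set {set 'I_n}}) (i j : 'I_n) : bool :=
  [forall O in T, (i \in O) ==> (j \in O)].
Definition simT (n : nat) (T : {set {set 'I_n}}) (i j : 'I_n) : bool :=
  leT T i j && leT T j i.
Definition ltT (n : nat) (T : {set {set 'I_n}}) (i j : 'I_n) : bool :=
  leT T i j && ~~ leT T j i.

Definition tprod (n n' : nat) (T : {set {set 'I_n}}) (T' : {set {set 'I_n'}})
  : {set {set 'I_(n + n')}} :=
  [set ((@lshift n n') @: O) :|: ((@rshift n n') @: O') | O : {set 'I_n} in T, O' : {set 'I_n'} in T'].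

(* Std(T_|Y): restriction to Y transported along the increasing bijection
   'I_#|Y| -> Y (enum_val enumerates Y in increasing order). *)
Definition stdres (n : nat) (T : {set {set 'I_n}}) (Y : {set 'I_n})
  : {set {set 'I_#|Y|}} :=
  [set [set i : 'I_#|Y| | enum_val i \in O] | O : {set 'I_n} in T].

Definition iotaT (n : nat) (T : {set {set 'I_n}}) : {set {set 'I_n}} :=
  [set ~: O | O : {set 'I_n} in T].

(* the unit of H_T: the unique topology on [0] *)
Definition unitT : {set {set 'I_0}} := [set set0].

Definition maxw (w : seq nat) : nat := \max_(x <- w) x.

Definition packed (w : seq nat) : bool :=
  all (fun x => 0 < x)%N w && all (fun k => k \in w) (iota 1 (maxw w)).

Definition pack (w : seq nat) : seq nat :=
  map (fun x => size (undup (filter (fun y => y <= x)%N w))) w.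

Definition jw (w : seq nat) : seq nat := map (fun x => (maxw w).+1 - x)%N w.

(* Elements of WQSym (resp. WQSym (x) WQSym) are encoded by their coefficient
   functions on the basis of packed words (resp. pairs of packed words). *)
Definition wqsym (K : Type) := seq nat -> K.

Definition wprod (K : fieldType) (a b : wqsym K) : wqsym K :=
  fun g => if packed g then
             \sum_(k < (size g).+1) a (pack (take k g)) * b (pack (drop k g))
           else 0.

(* coproduct of an element supported on packed words of length n:
   coefficient of u (x) v in Delta(a) *)
Definition wcoprod (K : fieldType) (n : nat) (a : wqsym K) (u v : seq nat) : K :=
  \sum_(t : n.-tuple 'I_n.+1)
    let g := map (@nat_of_ord _) (val t) in
    if packed g then
      a g * \sum_(0 <= k < (maxw g).+1)
              ((filter (fun x => x <= k)%N g == u) &&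
               (pack (filter (fun x => k < x)%N g) == v))%:R
    else 0.

Definition wcounit (K : fieldType) (a : wqsym K) : K := a [::].

Definition jmap (K : fieldType) (a : wqsym K) : wqsym K :=
  fun g => if packed g then a (jw g) else 0.

Definition wval (w : seq nat) (n : nat) (i : 'I_n) : nat := nth 0%N w i.

Definition is_Tpartition (n : nat) (T : {set {set 'I_n}}) (g : seq nat) : bool :=
  [&& size g == n, packed g &
      [forall i, forall j, leT T i j ==> (wval g i <= wval g j)%N]].

Definition ell1 (n : nat) (T : {set {set 'I_n}}) (g : seq nat) : nat :=
  #|[set p : 'I_n * 'I_n | [&& ltT T p.1 p.2, (p.1 < p.2)%N &
                               wval g p.1 == wval g p.2]]|.
Definition ell2 (n : nat) (T : {set {set 'I_n}}) (g : seq nat) : nat :=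
  #|[set p : 'I_n * 'I_n | [&& ltT T p.1 p.2, (p.2 < p.1)%N &
                               wval g p.1 == wval g p.2]]|.
Definition ell3 (n : nat) (T : {set {set 'I_n}}) (g : seq nat) : nat :=
  #|[set t : 'I_n * 'I_n * 'I_n |
      let: (i, j, k) := t in
      [&& (i < j)%N, (j < k)%N, simT T i k, ~~ simT T i j, ~~ simT T j k,
          wval g i == wval g j & wval g j == wval g k]]|.

Definition Gamma (K : fieldType) (q1 q2 q3 : K) (n : nat)
  (T : {set {set 'I_n}}) : wqsym K :=
  fun g => if is_Tpartition T g then
             q1 ^+ ell1 T g * q2 ^+ ell2 T g * q3 ^+ ell3 T g
           else 0.

(* A T-partition of T.T' is a T-partition of T followed by one of T', and no
   pair or triple counted by l1, l2, l3 meets both blocks, so Gamma_q is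
   multiplicative.  Cutting a T-partition g at a level k gives the open set
   {i | g(i) > k} together with T-partitions of the restrictions of T to it
   and to its complement; this is a bijection preserving the statistics, so
   Gamma_q is comultiplicative.  iota reverses <=_T and j reverses the letters:
   this exchanges l1 and l2 and fixes l3.  Finally Gamma_q is unitriangular:
   for the topology of up-sets of a packed word f, Gamma_q gives f plus words
   with strictly more comparable pairs of positions, hence surjectivity. *)

From HB Require Import structures.
From mathcomp Require Import all_boot all_order all_algebra.
From mathcomp Require Import zify ring.

Set Implicit Arguments.
Unset Strict Implicit.
Unset Printing Implicit Defensive.

Import GRing.Theory.

(** * Packing words *)

Definition letter_rank (w : seq nat) (x : nat) : nat :=
  size (undup [seq y <- w | y <= x]).

Lemma packE w : pack w = map (letter_rank w) w.
Proof. by []. Qed.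

Lemma size_pack w : size (pack w) = size w.
Proof. by rewrite packE size_map. Qed.

Lemma letter_rank_mono w : {homo letter_rank w : x y / x <= y}.
Proof.
move=> x y xy; apply: uniq_leq_size; first exact: undup_uniq.
move=> z; rewrite !mem_undup !mem_filter => /andP[zx ->]; rewrite andbT.
exact: leq_trans zx xy.
Qed.

Lemma letter_rank_lt w x y : y \in w -> x < y -> letter_rank w x < letter_rank w y.
Proof.
move=> yw xy; rewrite /letter_rank -[_.+1]/(size (y :: _)).
apply: uniq_leq_size => [|z].
  by rewrite /= undup_uniq andbT mem_undup mem_filter negb_and -ltnNge xy.
rewrite inE !mem_undup !mem_filter => /orP[/eqP->|/andP[zx ->]].
  by rewrite leqnn yw.
by rewrite (leq_trans zx (ltnW xy)).
Qed.

Lemma letter_rank_leE w x y : x \in w -> y \in w ->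
  (letter_rank w x <= letter_rank w y) = (x <= y).
Proof.
move=> xw yw; apply/idP/idP; last exact: letter_rank_mono.
by apply: contraLR; rewrite -!ltnNge; apply: letter_rank_lt.
Qed.

Lemma letter_rank_gt0 w x : x \in w -> 0 < letter_rank w x.
Proof.
move=> xw; rewrite lt0n size_eq0; apply: contraTneq isT => E.
by have := mem_undup [seq y <- w | y <= x] x; rewrite E mem_filter leqnn xw.
Qed.

Lemma letter_rank_le_size w x : letter_rank w x <= size (undup w).
Proof.
apply: uniq_leq_size; first exact: undup_uniq.
by move=> z; rewrite !mem_undup mem_filter => /andP[].
Qed.

Lemma leq_maxw w x : x \in w -> x <= maxw w.
Proof. by move=> xw; rewrite /maxw (leq_bigmax_seq x). Qed.

Lemma packedP w :
  reflect ((forall x, x \in w -> 0 < x) /\ (forall k, 0 < k <= maxw w -> k \in w))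
          (packed w).
Proof.
apply: (iffP andP) => [[/allP H1 /allP H2]|[H1 H2]]; split => //.
- by move=> k /andP[k0 km]; apply: H2; rewrite mem_iota k0 add1n ltnS.
- exact/allP.
- apply/allP => k; rewrite mem_iota add1n ltnS => /andP[k0 km].
  by apply: H2; rewrite k0.
Qed.

Lemma packed_mem_bounds w x : packed w -> x \in w -> 0 < x <= maxw w.
Proof. by case/packedP => pos _ xw; rewrite pos // leq_maxw. Qed.

Lemma maxw_le_size w : packed w -> maxw w <= size w.
Proof.
case/packedP=> _ full; rewrite -(size_iota 1 (maxw w)).
apply: uniq_leq_size => [|k]; first exact: iota_uniq.
by rewrite mem_iota add1n ltnS => kw; apply: full.
Qed.

Lemma letter_rank_packed w x : packed w -> x \in w -> letter_rank w x = x.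
Proof.
move=> pw xw; have [pos full] := packedP _ pw.
suff P : perm_eq (undup [seq y <- w | y <= x]) (iota 1 x).
  by rewrite /letter_rank (perm_size P) size_iota.
apply: uniq_perm; [exact: undup_uniq | exact: iota_uniq |] => z.
rewrite mem_undup mem_filter mem_iota add1n ltnS.
apply/andP/andP => [[zx zw]|[z0 zx]]; first by rewrite zx pos.
by split=> //; apply: full; rewrite z0 (leq_trans zx (leq_maxw xw)).
Qed.

Lemma pack_id w : packed w -> pack w = w.
Proof.
move=> pw; rewrite packE -[RHS]map_id; apply/eq_in_map => x.
exact: letter_rank_packed.
Qed.

Lemma pack_packed w : packed (pack w).
Proof.
apply/packedP; split=> [y|k /andP[k0 km]].
  by rewrite packE => /mapP[x xw ->]; apply: letter_rank_gt0.
have kd : k <= size (undup w).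
  apply: leq_trans km _; apply/bigmax_leqP_seq => y.
  by rewrite packE => /mapP[x _ ->] _; apply: letter_rank_le_size.
apply/negPn/negP => kn.
pose s := map (letter_rank w) (undup w).
have us : uniq s.
  rewrite map_inj_in_uniq ?undup_uniq // => x y; rewrite !mem_undup => xw yw.
  by move/eqP; rewrite eqn_leq !letter_rank_leE // -eqn_leq => /eqP.
suff : size (k :: s) <= size (iota 1 (size (undup w))).
  by rewrite /= size_map size_iota ltnn.
apply: uniq_leq_size => [|z].
  rewrite /= us andbT; apply: contra kn => /mapP[x xw ->].
  by apply: map_f; rewrite -mem_undup.
rewrite inE mem_iota add1n ltnS => /orP[/eqP->|]; first by rewrite k0.
move=> /mapP[x]; rewrite mem_undup => xw ->.
by rewrite letter_rank_gt0 // letter_rank_le_size.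
Qed.

Lemma nth_pack_leq w i j : i < size w -> j < size w ->
  (nth 0 (pack w) i <= nth 0 (pack w) j) = (nth 0 w i <= nth 0 w j).
Proof.
by move=> iw jw; rewrite packE !(nth_map 0) // letter_rank_leE // mem_nth.
Qed.

Lemma size_undup_map_eq (F G : nat -> nat) (s : seq nat) :
  {in s &, forall a b, (F a == F b) = (G a == G b)} ->
  size (undup (map F s)) = size (undup (map G s)).
Proof.
elim: s => //= a s IH FG.
have FGs : {in s &, forall a b, (F a == F b) = (G a == G b)}.
  by move=> x y xs ys; apply: FG; rewrite inE ?xs ?ys orbT.
have -> : (F a \in map F s) = (G a \in map G s).
  apply/mapP/mapP => -[b bs e]; exists b => //; apply/eqP.
    by rewrite eq_sym -FG ?inE ?eqxx ?bs ?orbT // e.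
  by rewrite eq_sym FG ?inE ?eqxx ?bs ?orbT // e.
by case: ifP => _ /=; rewrite IH.
Qed.

Lemma filter_nth_iota w (P : pred nat) :
  [seq y <- w | P y] = map (nth 0 w) [seq j <- iota 0 (size w) | P (nth 0 w j)].
Proof. by rewrite -filter_map map_nth_iota0 // take_size. Qed.

Lemma pack_eq w w' : size w = size w' ->
  (forall i j, i < size w -> j < size w ->
     (nth 0 w i <= nth 0 w j) = (nth 0 w' i <= nth 0 w' j)) ->
  pack w = pack w'.
Proof.
move=> sz cmp; apply: (@eq_from_nth _ 0) => [|i]; first by rewrite !size_pack.
rewrite size_pack => iw; rewrite !packE !(nth_map 0) -?sz //.
rewrite /letter_rank (filter_nth_iota w) (filter_nth_iota w') -sz.
have -> : [seq j <- iota 0 (size w) | nth 0 w' j <= nth 0 w' i] =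
          [seq j <- iota 0 (size w) | nth 0 w j <= nth 0 w i].
  by apply: eq_in_filter => j; rewrite mem_iota => /andP[_ jw]; rewrite cmp.
apply: size_undup_map_eq => a b; rewrite !mem_filter !mem_iota /=.
by move=> /andP[_ aw] /andP[_ bw]; rewrite !eqn_leq !cmp.
Qed.

Lemma packed_eq w w' : packed w -> packed w' -> size w = size w' ->
  (forall i j, i < size w -> j < size w ->
     (nth 0 w i <= nth 0 w j) = (nth 0 w' i <= nth 0 w' j)) ->
  w = w'.
Proof. by move=> pw pw' sz cmp; rewrite -(pack_id pw) -(pack_id pw'); apply: pack_eq. Qed.

(** * The statistics [ell1], [ell2], [ell3] *)

(* [ell1] and [ell2] only differ by the relation [r] between positions. *)
Definition pair_stat n (T : {set {set 'I_n}}) (g : seq nat) (r : rel nat) :=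
  [set p : 'I_n * 'I_n | [&& ltT T p.1 p.2, r p.1 p.2 & wval g p.1 == wval g p.2]].

Definition triple_stat n (T : {set {set 'I_n}}) (g : seq nat) :=
  [set t : 'I_n * 'I_n * 'I_n |
      let: (i, j, k) := t in
      [&& (i < j)%N, (j < k)%N, simT T i k, ~~ simT T i j, ~~ simT T j k,
          wval g i == wval g j & wval g j == wval g k]].

Lemma ell1E n (T : {set {set 'I_n}}) g : ell1 T g = #|pair_stat T g ltn|.
Proof. by []. Qed.

Lemma ell2E n (T : {set {set 'I_n}}) g :
  ell2 T g = #|pair_stat T g (fun i j => j < i)|.
Proof. by []. Qed.

Lemma ell3E n (T : {set {set 'I_n}}) g : ell3 T g = #|triple_stat T g|.
Proof. by []. Qed.

Section Transport.

Variables (m n : nat) (s : 'I_m -> 'I_n).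
Hypothesis s_mono : {mono s : a b / (a < b)%N}.
Variables (T1 : {set {set 'I_m}}) (T : {set {set 'I_n}}).
Hypothesis leT_s : forall a b, leT T1 a b = leT T (s a) (s b).
Variables (w g : seq nat).
Hypothesis eq_wval_s : forall a b, (wval w a == wval w b) = (wval g (s a) == wval g (s b)).

Let Y := [set s a | a in 'I_m].

Lemma mono_inj : injective s.
Proof.
move=> a b e; apply/val_inj/eqP; have := s_mono a b; have := s_mono b a.
by rewrite e ltnn; case: ltngtP.
Qed.

Lemma simT_s a b : simT T1 a b = simT T (s a) (s b).
Proof. by rewrite /simT !leT_s. Qed.

Lemma ltT_s a b : ltT T1 a b = ltT T (s a) (s b).
Proof. by rewrite /ltT !leT_s. Qed.

Lemma card_pair_stat_transport (r : rel nat) :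
  (forall a b, r (s a) (s b) = r a b) ->
  #|pair_stat T1 w r| = #|[set p in pair_stat T g r | (p.1 \in Y) && (p.2 \in Y)]|.
Proof.
move=> r_s; rewrite -(card_imset _ (f := fun p => (s p.1, s p.2))); last first.
  by move=> [a b] [c d] /= [/mono_inj -> /mono_inj ->].
apply: eq_card => -[x y]; rewrite !inE /=.
apply/imsetP/idP => [[[a b]]|].
  by rewrite inE /= => H [-> ->]; rewrite -ltT_s r_s -eq_wval_s H !imset_f.
case/andP=> H /andP[/imsetP[a _ ex] /imsetP[b _ ey]]; subst x y.
by exists (a, b); rewrite // inE /= ltT_s eq_wval_s -r_s.
Qed.

Lemma card_triple_stat_transport :
  #|triple_stat T1 w| =
  #|[set t in triple_stat T g | [&& t.1.1 \in Y, t.1.2 \in Y & t.2 \in Y]]|.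
Proof.
rewrite -(card_imset _ (f := fun t => (s t.1.1, s t.1.2, s t.2))); last first.
  by move=> [[a b] c] [[d e] f] /= [/mono_inj -> /mono_inj -> /mono_inj ->].
apply: eq_card => -[[x y] z]; rewrite !inE /=.
apply/imsetP/idP => [[[[a b] c]]|].
  by rewrite inE /= => H [-> -> ->]; rewrite -!simT_s !s_mono -!eq_wval_s H !imset_f.
case/andP=> H /and3P[/imsetP[a _ ex] /imsetP[b _ ey] /imsetP[c _ ez]]; subst x y z.
by exists (a, b, c); rewrite // inE /= !simT_s !eq_wval_s -!s_mono.
Qed.

End Transport.

Lemma card_pair_split n (S : {set 'I_n * 'I_n}) (Y : {set 'I_n}) :
  (forall p, p \in S -> (p.1 \in Y) = (p.2 \in Y)) ->
  #|S| = #|[set p in S | (p.1 \in Y) && (p.2 \in Y)]|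
       + #|[set p in S | (p.1 \in ~: Y) && (p.2 \in ~: Y)]|.
Proof.
move=> HY; rewrite -(cardsID [set p | p.1 \in Y] S); congr (_ + _);
  apply: eq_card => p; rewrite !inE; case pS: (p \in S); rewrite ?andbF //= HY //.
- by rewrite andbb.
- by rewrite andbb andbC.
Qed.

Lemma card_triple_split n (S : {set 'I_n * 'I_n * 'I_n}) (Y : {set 'I_n}) :
  (forall t, t \in S -> (t.1.1 \in Y) = (t.1.2 \in Y) /\ (t.1.2 \in Y) = (t.2 \in Y)) ->
  #|S| = #|[set t in S | [&& t.1.1 \in Y, t.1.2 \in Y & t.2 \in Y]]|
       + #|[set t in S | [&& t.1.1 \in ~: Y, t.1.2 \in ~: Y & t.2 \in ~: Y]]|.
Proof.
move=> HY; rewrite -(cardsID [set t | t.1.1 \in Y] S); congr (_ + _);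
  apply: eq_card => t; rewrite !inE; case tS: (t \in S); rewrite ?andbF //=;
  have [-> ->] := HY t tS.
- by rewrite andbb andbb.
- by rewrite andbb andbb andbC.
Qed.

Definition Tmonotone n (T : {set {set 'I_n}}) (g : seq nat) :=
  [forall i, forall j, leT T i j ==> (wval g i <= wval g j)].

Lemma is_TpartitionE n (T : {set {set 'I_n}}) g :
  is_Tpartition T g = [&& size g == n, packed g & Tmonotone T g].
Proof. by []. Qed.

Definition weight (K : fieldType) (q1 q2 q3 : K) n (T : {set {set 'I_n}}) g : K :=
  (q1 ^+ ell1 T g * q2 ^+ ell2 T g * q3 ^+ ell3 T g)%R.

Lemma GammaE (K : fieldType) (q1 q2 q3 : K) n (T : {set {set 'I_n}}) g :
  Gamma q1 q2 q3 T g = if is_Tpartition T g then weight q1 q2 q3 T g else 0%R.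
Proof. by []. Qed.

Lemma Gamma_neq0_Tpartition (K : fieldType) (q1 q2 q3 : K) n (T : {set {set 'I_n}}) g :
  Gamma q1 q2 q3 T g != 0%R -> is_Tpartition T g.
Proof. by rewrite GammaE; case: ifP; rewrite ?eqxx. Qed.

Lemma size_Gamma_neq0 (K : fieldType) (q1 q2 q3 : K) n (T : {set {set 'I_n}}) g :
  Gamma q1 q2 q3 T g != 0%R -> size g = n.
Proof. by move/Gamma_neq0_Tpartition => /and3P[/eqP]. Qed.

Section Split.

Variables (n m1 m2 : nat) (s1 : 'I_m1 -> 'I_n) (s2 : 'I_m2 -> 'I_n).
Hypotheses (s1_mono : {mono s1 : a b / (a < b)%N}) (s2_mono : {mono s2 : a b / (a < b)%N}).
Let Y := [set s1 a | a in 'I_m1].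
Hypothesis s2_compl : ~: Y = [set s2 b | b in 'I_m2].
Variables (T : {set {set 'I_n}}) (T1 : {set {set 'I_m1}}) (T2 : {set {set 'I_m2}}).
Hypotheses (leT_s1 : forall a b, leT T1 a b = leT T (s1 a) (s1 b))
           (leT_s2 : forall a b, leT T2 a b = leT T (s2 a) (s2 b)).
Variables (g w1 w2 : seq nat).
Hypotheses
  (leq_s1 : forall a b, (wval w1 a <= wval w1 b) = (wval g (s1 a) <= wval g (s1 b)))
  (leq_s2 : forall a b, (wval w2 a <= wval w2 b) = (wval g (s2 a) <= wval g (s2 b))).
Hypothesis pair_block : forall i j,
  ltT T i j -> wval g i = wval g j -> (i \in Y) = (j \in Y).
Hypothesis triple_block : forall i j k : 'I_n, (i < j < k)%N -> simT T i k ->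
  wval g i = wval g j -> wval g j = wval g k ->
  (i \in Y) = (j \in Y) /\ (j \in Y) = (k \in Y).

Let eq_s1 a b : (wval w1 a == wval w1 b) = (wval g (s1 a) == wval g (s1 b)).
Proof. by rewrite !eqn_leq !leq_s1. Qed.
Let eq_s2 a b : (wval w2 a == wval w2 b) = (wval g (s2 a) == wval g (s2 b)).
Proof. by rewrite !eqn_leq !leq_s2. Qed.

Lemma card_pair_stat_split (r : rel nat) :
  (forall a b, r (s1 a) (s1 b) = r a b) -> (forall a b, r (s2 a) (s2 b) = r a b) ->
  #|pair_stat T g r| = #|pair_stat T1 w1 r| + #|pair_stat T2 w2 r|.
Proof.
move=> r1 r2; rewrite (card_pair_stat_transport s1_mono leT_s1 eq_s1 r1).
rewrite (card_pair_stat_transport s2_mono leT_s2 eq_s2 r2) -s2_compl.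
apply: card_pair_split => p; rewrite inE => /and3P[lt_p _ /eqP].
exact: pair_block.
Qed.

Lemma card_triple_stat_split :
  #|triple_stat T g| = #|triple_stat T1 w1| + #|triple_stat T2 w2|.
Proof.
rewrite (card_triple_stat_transport s1_mono leT_s1 eq_s1).
rewrite (card_triple_stat_transport s2_mono leT_s2 eq_s2) -s2_compl.
apply: card_triple_split => -[[i j] k]; rewrite inE /=.
case/and5P=> ij jk ik _ /and3P[_ /eqP gij /eqP gjk].
by apply: triple_block; rewrite ?ij.
Qed.

Lemma ell_split :
  [/\ ell1 T g = ell1 T1 w1 + ell1 T2 w2, ell2 T g = ell2 T1 w1 + ell2 T2 w2
    & ell3 T g = ell3 T1 w1 + ell3 T2 w2].
Proof.
rewrite !ell1E !ell2E !ell3E card_triple_stat_split.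
by rewrite !card_pair_stat_split // => a b; rewrite ?s1_mono ?s2_mono.
Qed.

Lemma weight_split (K : fieldType) (q1 q2 q3 : K) :
  weight q1 q2 q3 T g = (weight q1 q2 q3 T1 w1 * weight q1 q2 q3 T2 w2)%R.
Proof.
rewrite /weight; have [-> -> ->] := ell_split; rewrite !exprD.
move: (q1 ^+ _)%R (q1 ^+ _)%R (q2 ^+ _)%R (q2 ^+ _)%R (q3 ^+ _)%R (q3 ^+ _)%R.
by move=> a a' b b' c c'; ring.
Qed.

Lemma Tmonotone_split :
  (forall i j, (i \in Y) != (j \in Y) -> leT T i j -> wval g i <= wval g j) ->
  Tmonotone T g = Tmonotone T1 w1 && Tmonotone T2 w2.
Proof.
move=> cross; apply/forallP/andP => [mon|[/forallP mon1 /forallP mon2] i].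
  split; apply/forallP => a; apply/forallP => b; apply/implyP.
    by rewrite leq_s1 leT_s1; apply/implyP/(forallP (mon _)).
  by rewrite leq_s2 leT_s2; apply/implyP/(forallP (mon _)).
apply/forallP => j; apply/implyP => ij.
have img2 x : x \notin Y -> exists b, x = s2 b.
  by rewrite -in_setC s2_compl => /imsetP[b _ ->]; exists b.
case: (boolP (i \in Y)) => iY; case: (boolP (j \in Y)) => jY;
  try by apply: cross ij; move: iY jY; case: (i \in Y); case: (j \in Y).
- move: ij; case/imsetP: iY => a _ ->; case/imsetP: jY => b _ ->.
  by rewrite -leq_s1 -leT_s1; apply/implyP/(forallP (mon1 a)).
- move: ij; have [a ->] := img2 i iY; have [b ->] := img2 j jY.
  by rewrite -leq_s2 -leT_s2; apply/implyP/(forallP (mon2 a)).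
Qed.

End Split.

(** * The preorder of a topology *)

Section TopologyPreorder.

Variables (n : nat) (T : {set {set 'I_n}}).

Lemma leT_iotaT i j : leT (iotaT T) i j = leT T j i.
Proof.
apply/forallP/forallP => H O.
  apply/implyP => OT; apply/implyP => jO; apply/negPn/negP => iO.
  by have := H (~: O); rewrite imset_f // !inE iO jO.
apply/implyP => /imsetP[O' O'T ->]; rewrite !inE; apply/implyP; apply: contra.
by have := H O'; rewrite O'T /= => /implyP.
Qed.

Lemma simT_iotaT i j : simT (iotaT T) i j = simT T i j.
Proof. by rewrite /simT !leT_iotaT andbC. Qed.

Lemma ltT_iotaT i j : ltT (iotaT T) i j = ltT T j i.
Proof. by rewrite /ltT !leT_iotaT. Qed.

Lemma leT_stdres (Y : {set 'I_n}) a b :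
  leT (stdres T Y) a b = leT T (enum_val a) (enum_val b).
Proof.
apply/forallP/forallP => H O.
  by apply/implyP => OT; have := H [set i | enum_val i \in O]; rewrite imset_f // !inE.
by apply/implyP => /imsetP[O' O'T ->]; rewrite !inE; have := H O'; rewrite O'T.
Qed.

Hypothesis topT : is_topology T.

Lemma set0_open : set0 \in T.
Proof. by case/and4P: topT. Qed.

Lemma setT_open : setT \in T.
Proof. by case/and4P: topT. Qed.

(* Each up-set is the union of the minimal open neighbourhoods of its points. *)
Lemma upset_open (O : {set 'I_n}) :
  (forall i j, i \in O -> leT T i j -> j \in O) -> O \in T.
Proof.
case/and4P: topT => T0 T1 /forallP TU /forallP TI upO.
have capT (i : 'I_n) : \bigcap_(O' in T | i \in O') O' \in T.
  apply: (big_ind (fun X => X \in T)) => [//||O' /andP[] //] X Z XT ZT.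
  by have := TI X; rewrite XT /= => /forallP/(_ Z); rewrite ZT.
have -> : O = \bigcup_(i in O) \bigcap_(O' in T | i \in O') O'.
  apply/setP => j; apply/idP/bigcupP => [jO|[i iO /bigcapP Hj]].
    by exists j => //; apply/bigcapP => O' /andP[].
  apply: (upO i) => //; apply/forallP => O'; apply/implyP => O'T; apply/implyP => iO'.
  by apply: Hj; rewrite O'T.
apply: (big_ind (fun X => X \in T)) => // X Z XT ZT.
by have := TU X; rewrite XT /= => /forallP/(_ Z); rewrite ZT.
Qed.

End TopologyPreorder.

(** * The involutions [iota] and [j] *)

Lemma jw_packed g : packed g -> packed (jw g).
Proof.
move=> pg; have /packedP[_ full] := pg.
apply/packedP; split=> [x /mapP[y yg ->]|k /andP[k0 km]].
  by have := packed_mem_bounds pg yg; lia.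
have km' : k <= maxw g.
  apply: leq_trans km _; apply/bigmax_leqP_seq => x /mapP[y yg ->] _.
  by have := packed_mem_bounds pg yg; lia.
by apply/mapP; exists ((maxw g).+1 - k); [apply: full | ]; lia.
Qed.

Section Reversal.

Variables (n : nat) (T : {set {set 'I_n}}) (g : seq nat).
Hypotheses (pg : packed g) (size_g : size g = n).

Let wval_bounds (i : 'I_n) : 0 < wval g i <= maxw g.
Proof. by apply: packed_mem_bounds => //; rewrite mem_nth // size_g. Qed.

Lemma wval_jw (i : 'I_n) : wval (jw g) i = (maxw g).+1 - wval g i.
Proof. by rewrite /wval /jw (nth_map 0) // size_g. Qed.

Let eq_wval_jw (i j : 'I_n) : (wval (jw g) i == wval (jw g) j) = (wval g i == wval g j).
Proof. by rewrite !wval_jw; have := wval_bounds i; have := wval_bounds j; lia. Qed.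

Lemma Tmonotone_iotaT : Tmonotone (iotaT T) g = Tmonotone T (jw g).
Proof.
apply/forallP/forallP => mon i; apply/forallP => j; have := forallP (mon j) i.
  rewrite leT_iotaT !wval_jw.
  by have := wval_bounds i; have := wval_bounds j; case: leT => //= ? ?; lia.
rewrite -leT_iotaT !wval_jw.
by have := wval_bounds i; have := wval_bounds j; case: leT => //= ? ?; lia.
Qed.

Lemma card_pair_stat_iotaT (r : rel nat) :
  #|pair_stat (iotaT T) g r| = #|pair_stat T (jw g) (fun i j => r j i)|.
Proof.
rewrite -(card_imset _ (f := fun p : 'I_n * 'I_n => (p.2, p.1))); last first.
  by move=> [a c] [d e] /= [-> ->].
apply: eq_card => -[x y]; rewrite !inE /=; apply/imsetP/idP => [[[a c]]|H].
  by rewrite inE /= ltT_iotaT eq_wval_jw => H [-> ->]; rewrite eq_sym.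
by exists (y, x); rewrite // inE /= ltT_iotaT -eq_wval_jw eq_sym.
Qed.

Lemma weight_iotaT (K : fieldType) (q1 q2 q3 : K) :
  weight q1 q2 q3 (iotaT T) g = weight q2 q1 q3 T (jw g).
Proof.
have ell3_iotaT : ell3 (iotaT T) g = ell3 T (jw g).
  by apply: eq_card => -[[x y] z]; rewrite !inE /= !simT_iotaT !eq_wval_jw.
rewrite /weight ell3_iotaT !ell1E !ell2E !card_pair_stat_iotaT.
by rewrite [in RHS](mulrC (q2 ^+ _)%R).
Qed.

End Reversal.

Lemma Gamma_jmap (K : fieldType) (q1 q2 q3 : K) n (T : {set {set 'I_n}}) g :
  jmap (Gamma q2 q1 q3 T) g = Gamma q1 q2 q3 (iotaT T) g.
Proof.
rewrite /jmap !GammaE !is_TpartitionE.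
case pg: (packed g); last by rewrite andbF.
rewrite jw_packed // size_map; case: (eqVneq (size g) n) => //= size_g.
by rewrite Tmonotone_iotaT // weight_iotaT.
Qed.

(** * Unit and counit *)

Lemma Gamma_nil (K : fieldType) (q1 q2 q3 : K) (T : {set {set 'I_0}}) :
  Gamma q1 q2 q3 T [::] = 1%R.
Proof.
have no_pair (S : {set 'I_0 * 'I_0}) : #|S| = 0 by apply: eq_card0 => -[[]].
have no_triple (S : {set 'I_0 * 'I_0 * 'I_0}) : #|S| = 0 by apply: eq_card0 => -[[[]]].
rewrite GammaE is_TpartitionE /packed /maxw big_nil /=.
have -> : Tmonotone T [::] by apply/forallP => -[].
by rewrite /weight /ell1 /ell2 /ell3 !no_pair no_triple !expr0 !mulr1.
Qed.

Lemma Gamma_unitT (K : fieldType) (q1 q2 q3 : K) g :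
  Gamma q1 q2 q3 unitT g = (g == [::])%:R%R.
Proof. by case: g => [|x g]; [apply: Gamma_nil | rewrite GammaE]. Qed.

Lemma wcounit_Gamma (K : fieldType) (q1 q2 q3 : K) n (T : {set {set 'I_n}}) :
  wcounit (Gamma q1 q2 q3 T) = (n == 0)%:R%R.
Proof. by case: n T => [|n] T; [apply: Gamma_nil | rewrite /wcounit GammaE]. Qed.

(** * Surjectivity *)

Definition upsets n (R : rel 'I_n) : {set {set 'I_n}} :=
  [set O : {set 'I_n} | [forall i, forall j, R i j ==> (i \in O) ==> (j \in O)]].

Lemma upsets_topology n (R : rel 'I_n) : is_topology (upsets R).
Proof.
apply/and4P; split; rewrite ?inE; try by apply/forallP => i; apply/forallP => j;
  rewrite !inE ?implybT.
- apply/forallP => O1; apply/implyP; rewrite inE => /forallP up1.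
  apply/forallP => O2; apply/implyP; rewrite inE => /forallP up2.
  rewrite inE; apply/forallP => i; apply/forallP => j; apply/implyP => ij.
  rewrite !inE; apply/implyP => /orP[iO|iO]; apply/orP; [left|right].
    by have /implyP/(_ ij)/implyP := forallP (up1 i) j; apply.
  by have /implyP/(_ ij)/implyP := forallP (up2 i) j; apply.
- apply/forallP => O1; apply/implyP; rewrite inE => /forallP up1.
  apply/forallP => O2; apply/implyP; rewrite inE => /forallP up2.
  rewrite inE; apply/forallP => i; apply/forallP => j; apply/implyP => ij.
  rewrite !inE; apply/implyP => /andP[iO1 iO2]; apply/andP; split.
    by have /implyP/(_ ij)/implyP := forallP (up1 i) j; apply.
  by have /implyP/(_ ij)/implyP := forallP (up2 i) j; apply.
Qed.

Lemma leT_upsets n (R : rel 'I_n) : reflexive R -> transitive R ->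
  forall i j, leT (upsets R) i j = R i j.
Proof.
move=> Rrefl Rtrans i j; apply/forallP/idP => [H|ij O].
  have /implyP := H [set x | R i x]; rewrite !inE Rrefl; apply.
  apply/forallP => a; apply/forallP => b; apply/implyP => ab.
  by rewrite !inE; apply/implyP => ia; apply: Rtrans ab.
by apply/implyP; rewrite inE => /forallP/(_ i)/forallP/(_ j); rewrite ij.
Qed.

Definition word_topology n (f : seq nat) := upsets [rel i j : 'I_n | wval f i <= wval f j].

Lemma leT_word_topology n f (i j : 'I_n) :
  leT (word_topology n f) i j = (wval f i <= wval f j).
Proof. by apply: leT_upsets => [a|b a c]; [apply: leqnn | apply: leq_trans]. Qed.

Lemma Gamma_word_topology (K : fieldType) (q1 q2 q3 : K) n f :
  size f = n -> packed f -> Gamma q1 q2 q3 (word_topology n f) f = 1%R.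
Proof.
move=> size_f pf; rewrite GammaE is_TpartitionE size_f eqxx pf.
have -> : Tmonotone (word_topology n f) f.
  by apply/forallP => i; apply/forallP => j; rewrite leT_word_topology implybb.
have no_tie (i j : 'I_n) : ltT (word_topology n f) i j -> wval f i != wval f j.
  by rewrite /ltT !leT_word_topology; case: ltngtP.
have e1 : ell1 (word_topology n f) f = 0.
  by apply: eq_card0 => -[i j]; rewrite !inE /=; apply/and3P => -[/no_tie/negP].
have e2 : ell2 (word_topology n f) f = 0.
  by apply: eq_card0 => -[i j]; rewrite !inE /=; apply/and3P => -[/no_tie/negP].
have e3 : ell3 (word_topology n f) f = 0.
  apply: eq_card0 => -[[i j] k]; rewrite !inE /simT !leT_word_topology /=.
  by apply/negP => /and5P[_ _ _ ij /and3P[_ /eqP e _]]; move: ij; rewrite e leqnn.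
by rewrite /weight e1 e2 e3 !expr0 !mulr1.
Qed.

Definition le_pairs n (g : seq nat) := [set p : 'I_n * 'I_n | wval g p.1 <= wval g p.2].

Lemma ltn_card_le_pairs n f g : size f = n -> packed f ->
  is_Tpartition (word_topology n f) g -> g != f -> #|le_pairs n f| < #|le_pairs n g|.
Proof.
move=> size_f pf /and3P[/eqP size_g pg /forallP mon] gf.
have sub : le_pairs n f \subset le_pairs n g.
  apply/subsetP => -[i j]; rewrite !inE /= => fij.
  by have /implyP := forallP (mon i) j; rewrite leT_word_topology; apply.
rewrite ltn_neqAle subset_leq_card // andbT; apply: contra gf => /eqP card_eq.
have /eqP same : le_pairs n f == le_pairs n g by rewrite eqEcard sub card_eq leqnn.
apply/eqP/packed_eq => //; first by rewrite size_f.
move=> i j; rewrite size_g => ilt jlt.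
by have /setP/(_ (Ordinal ilt, Ordinal jlt)) := same; rewrite !inE.
Qed.

Definition toword n (t : n.-tuple 'I_n.+1) : seq nat := map val (val t).

Lemma size_toword n (t : n.-tuple 'I_n.+1) : size (toword t) = n.
Proof. by rewrite size_map size_tuple. Qed.

Lemma toword_inj n : injective (@toword n).
Proof. by move=> t1 t2 /(inj_map val_inj)/val_inj. Qed.

Lemma toword_packed n g : size g = n -> packed g -> exists t : n.-tuple 'I_n.+1, toword t = g.
Proof.
move=> size_g pg; have size_g' : size (map (@inord n) g) == n by rewrite size_map size_g.
exists (Tuple size_g'); rewrite /toword /= -map_comp -[RHS]map_id.
apply/eq_in_map => x xg /=; rewrite inordK // ltnS -size_g.
exact: leq_trans (leq_maxw xg) (maxw_le_size pg).
Qed.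

Section Surjectivity.

Local Open Scope ring_scope.
Variables (K : fieldType) (q1 q2 q3 : K).
Notation G := (Gamma q1 q2 q3).

Definition Gamma_preimage n (f : seq nat) (c : {set {set 'I_n}} -> K) :=
  (forall T, c T != 0 -> is_topology T) /\
  (forall g : seq nat, \sum_(T : {set {set 'I_n}}) c T * G T g = (g == f)%:R).
Arguments Gamma_preimage : clear implicits.

(* [G (word_topology f)] is [f] plus a combination of words [g] with strictly
   more comparable pairs; subtract their preimages. *)
Lemma Gamma_preimage_step n f : size f = n -> packed f ->
  let Tf := word_topology n f in
  (forall t : n.-tuple 'I_n.+1, toword t != f -> G Tf (toword t) != 0 ->
     exists c, Gamma_preimage n (toword t) c) ->
  exists c, Gamma_preimage n f c.
Proof.
move=> size_f pf Tf IH.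
pose cond (t : n.-tuple 'I_n.+1) := (toword t != f) && (G Tf (toword t) != 0).
have /fin_all_exists[C HC] : forall t, exists c, cond t -> Gamma_preimage n (toword t) c.
  move=> t; case ct: (cond t); last by exists (fun _ => 0).
  by case/andP: ct => /IH H /H[c Hc]; exists c.
exists (fun T => (T == Tf)%:R - \sum_t (if cond t then G Tf (toword t) * C t T else 0)).
split=> [T|g].
  apply: contraR => nT; have -> : (T == Tf) = false.
    by apply: contraNF nT => /eqP ->; apply: upsets_topology.
  rewrite sub0r oppr_eq0; apply/eqP/big1 => t _; case ct: (cond t) => //.
  have [topC _] := HC t ct.
  by rewrite (_ : C t T = 0) ?mulr0 //; apply/eqP; apply: contraR nT; apply: topC.
under eq_bigr => T _ do rewrite mulrBl mulr_suml.
rewrite sumrB (bigD1 Tf) //= eqxx mul1r big1 ?addr0; last first.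
  by move=> T /negbTE ->; rewrite mul0r.
have inner t : \sum_T (if cond t then G Tf (toword t) * C t T else 0) * G T g
               = if cond t then G Tf (toword t) * (g == toword t)%:R else 0.
  case ct: (cond t); last by rewrite big1 // => T _; rewrite mul0r.
  by have [_ <-] := HC t ct; rewrite mulr_sumr; apply: eq_bigr => T _; rewrite mulrA.
rewrite exchange_big /=; under eq_bigr => t _ do rewrite inner.
have [-> | ngf] := eqVneq g f.
  rewrite Gamma_word_topology // big1 ?subr0 // => t _; case ct: (cond t) => //.
  by case/andP: ct => ne _; rewrite eq_sym (negbTE ne) mulr0.
have [G0 | /[dup] nG0 /Gamma_neq0_Tpartition /and3P[/eqP size_g pg _]] := eqVneq (G Tf g) 0.
  rewrite G0 sub0r big1 ?oppr0 // => t _; case: ifP => // _.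
  by case: eqVneq => [<-|]; rewrite ?G0 ?mul0r ?mulr0.
have [t0 tg] := toword_packed size_g pg; subst g.
rewrite (bigD1 t0) //= big1.
  by rewrite /cond ngf nG0 eqxx mulr1 addr0 subrr.
move=> t nt; case: ifP => // _.
by rewrite (_ : (_ == _) = false) ?mulr0 //; apply: contraNF nt => /eqP/toword_inj ->.
Qed.

Lemma Gamma_surjective n f : size f = n -> packed f -> exists c, Gamma_preimage n f c.
Proof.
have le_pairs_max g : (#|le_pairs n g| <= n * n)%N.
  by apply: leq_trans (max_card _) _; rewrite card_prod !card_ord.
move=> size_f pf; have [k] := ubnP (n * n - #|le_pairs n f|)%N.
elim: k f size_f pf => [//|k IH] f size_f pf bound.
apply: Gamma_preimage_step => // t ne /Gamma_neq0_Tpartition Tt.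
apply: IH; rewrite ?size_toword //; first by case/and3P: Tt.
have := ltn_card_le_pairs size_f pf Tt ne.
by have := le_pairs_max f; have := le_pairs_max (toword t); lia.
Qed.

End Surjectivity.

(** * Compatibility with the product *)

Section Product.

Variables (n n' : nat) (T : {set {set 'I_n}}) (T' : {set {set 'I_n'}}).
Hypotheses (topT : is_topology T) (topT' : is_topology T').

Notation L := (@lshift n n').
Notation R := (@rshift n n').
Notation glue O O' := (L @: O :|: R @: O').

Lemma mem_glue_L a (O : {set 'I_n}) (O' : {set 'I_n'}) : (L a \in glue O O') = (a \in O).
Proof.
rewrite inE mem_imset; last exact: lshift_inj.
by case: (a \in O) => //=; apply/negbTE/imsetP => -[b _ /eqP]; rewrite eq_lrshift.
Qed.

Lemma mem_glue_R b (O : {set 'I_n}) (O' : {set 'I_n'}) : (R b \in glue O O') = (b \in O').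
Proof.
rewrite inE orbC mem_imset; last exact: rshift_inj.
by case: (b \in O') => //=; apply/negbTE/imsetP => -[a _ /eqP]; rewrite eq_rlshift.
Qed.

Lemma glue_open O O' : O \in T -> O' \in T' -> glue O O' \in tprod T T'.
Proof. by move=> OT O'T; apply/imset2P; exists O O'. Qed.

Lemma leT_tprod_LL a b : leT (tprod T T') (L a) (L b) = leT T a b.
Proof.
apply/forallP/forallP => H O; apply/implyP.
  by move=> OT; have := H (glue O setT); rewrite glue_open ?setT_open // !mem_glue_L.
by case/imset2P=> O1 O1' O1T _ ->; rewrite !mem_glue_L; have := H O1; rewrite O1T.
Qed.

Lemma leT_tprod_RR a b : leT (tprod T T') (R a) (R b) = leT T' a b.
Proof.
apply/forallP/forallP => H O; apply/implyP.
  by move=> OT; have := H (glue setT O); rewrite glue_open ?setT_open // !mem_glue_R.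
by case/imset2P=> O1 O1' _ O1'T ->; rewrite !mem_glue_R; have := H O1'; rewrite O1'T.
Qed.

Lemma leT_tprod_block (x y : 'I_(n + n')) : leT (tprod T T') x y -> (x < n) = (y < n).
Proof.
case: (split_ordP x) => a ->; case: (split_ordP y) => b -> /forallP /= mon //.
- have := mon (glue setT set0); rewrite glue_open ?setT_open ?set0_open //.
  by rewrite mem_glue_L mem_glue_R !inE.
- have := mon (glue set0 setT); rewrite glue_open ?setT_open ?set0_open //.
  by rewrite mem_glue_L mem_glue_R !inE.
Qed.

Lemma mem_lshift_img (x : 'I_(n + n')) : (x \in [set L a | a in 'I_n]) = (x < n).
Proof.
apply/imsetP/idP => [[a _ ->]|]; first by rewrite /= ltn_ord.
by case: (split_ordP x) => [a ->|b ->] /=; [exists a | lia].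
Qed.

Lemma setC_lshift_img : ~: [set L a | a in 'I_n] = [set R b | b in 'I_n'].
Proof.
apply/setP => x; rewrite inE mem_lshift_img; apply/idP/imsetP => [|[b _ ->]] /=.
  by case: (split_ordP x) => [a ->|b ->] //= _; exists b.
by rewrite -leqNgt leq_addr.
Qed.

Variable g : seq nat.
Hypotheses (pg : packed g) (size_g : size g = n + n').

Let w1 := pack (take n g).
Let w2 := pack (drop n g).

Let size_take_g : size (take n g) = n.
Proof. by rewrite size_takel // size_g leq_addr. Qed.
Let size_drop_g : size (drop n g) = n'.
Proof. by rewrite size_drop size_g addKn. Qed.

Lemma Gamma_tprod (K : fieldType) (q1 q2 q3 : K) :
  Gamma q1 q2 q3 (tprod T T') g = (Gamma q1 q2 q3 T w1 * Gamma q1 q2 q3 T' w2)%R.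
Proof.
have leq_L a b : (wval w1 a <= wval w1 b) = (wval g (L a) <= wval g (L b)).
  by rewrite /wval nth_pack_leq ?size_take_g // !nth_take.
have leq_R a b : (wval w2 a <= wval w2 b) = (wval g (R a) <= wval g (R b)).
  by rewrite /wval nth_pack_leq ?size_drop_g // !nth_drop.
have leT_L a b : leT T a b = leT (tprod T T') (L a) (L b) by rewrite leT_tprod_LL.
have leT_R a b : leT T' a b = leT (tprod T T') (R a) (R b) by rewrite leT_tprod_RR.
have L_mono : {mono L : a b / (a < b)%N} by [].
have R_mono : {mono R : a b / (a < b)%N} by move=> a b; rewrite /= ltn_add2l.
have pair_block x y : ltT (tprod T T') x y -> wval g x = wval g y ->
    (x \in [set L a | a in 'I_n]) = (y \in [set L a | a in 'I_n]).
  by case/andP=> /leT_tprod_block xy _ _; rewrite !mem_lshift_img.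
have triple_block (x y z : 'I_(n + n')) : (x < y < z)%N -> simT (tprod T T') x z ->
    wval g x = wval g y -> wval g y = wval g z ->
    (x \in [set L a | a in 'I_n]) = (y \in [set L a | a in 'I_n]) /\
    (y \in [set L a | a in 'I_n]) = (z \in [set L a | a in 'I_n]).
  by move=> xyz /andP[/leT_tprod_block xz _] _ _; rewrite !mem_lshift_img; lia.
rewrite !GammaE !is_TpartitionE size_g size_pack size_take_g size_pack size_drop_g.
rewrite !eqxx pg !pack_packed /=.
rewrite (Tmonotone_split setC_lshift_img leT_L leT_R leq_L leq_R); last first.
  by move=> x y; rewrite !mem_lshift_img => + /leT_tprod_block xy; rewrite xy eqxx.
case: (Tmonotone T w1); last by rewrite mul0r.
case: (Tmonotone T' w2); last by rewrite mulr0.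
by rewrite (weight_split L_mono R_mono setC_lshift_img leT_L leT_R leq_L leq_R
  pair_block triple_block).
Qed.

End Product.

(* Only the cut at position [n] contributes, by homogeneity. *)
Lemma Gamma_tprod_wprod (K : fieldType) (q1 q2 q3 : K) n n'
    (T : {set {set 'I_n}}) (T' : {set {set 'I_n'}}) :
  is_topology T -> is_topology T' -> forall g,
  Gamma q1 q2 q3 (tprod T T') g = wprod (Gamma q1 q2 q3 T) (Gamma q1 q2 q3 T') g.
Proof.
move=> topT topT' g; rewrite /wprod.
case pg: (packed g); last by rewrite GammaE is_TpartitionE pg andbF.
have cut_size (k : 'I_(size g).+1) :
    (Gamma q1 q2 q3 T (pack (take k g)) * Gamma q1 q2 q3 T' (pack (drop k g)) != 0)%R ->
    k = n :> nat /\ size g = n + n'.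
  have k_le : k <= size g := ltn_ord k.
  rewrite mulf_eq0 negb_or => /andP[/size_Gamma_neq0 + /size_Gamma_neq0].
  by rewrite !size_pack size_drop size_takel //; lia.
have [size_g | size_g] := eqVneq (size g) (n + n'); last first.
  rewrite GammaE is_TpartitionE (negbTE size_g) big1 // => k _; apply/eqP.
  by apply: contraR size_g => /cut_size[_ ->].
have nlt : n < (size g).+1 by rewrite size_g ltnS leq_addr.
rewrite (bigD1 (Ordinal nlt)) //= big1 ?addr0; first exact: Gamma_tprod.
move=> k nk; apply/eqP; apply: contraR nk => /cut_size[kn _].
by apply/eqP/val_inj.
Qed.

(** * Compatibility with the coproduct *)

Section EnumSet.

Variables (n : nat) (Y : {set 'I_n}).

Lemma size_enum_set : size (enum Y) = #|Y|.
Proof. by rewrite cardE. Qed.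

Lemma enum_setE : enum Y = [seq x <- enum 'I_n | x \in Y].
Proof. by rewrite enumT. Qed.

Lemma sorted_enum_set : sorted (fun x y : 'I_n => x < y) (enum Y).
Proof.
rewrite enum_setE; apply: sorted_filter => [x y z|]; first exact: ltn_trans.
by have := iota_ltn_sorted 0 n; rewrite -val_enum_ord sorted_map.
Qed.

Lemma enum_val_mono (a b : 'I_#|Y|) : (enum_val a < enum_val b) = (a < b).
Proof.
have lt_trans : transitive (fun x y : 'I_n => x < y) by move=> y x z; apply: ltn_trans.
have mono (c d : 'I_#|Y|) : c < d -> enum_val c < enum_val d.
  have x0 : 'I_n := enum_val c.
  move=> cd; rewrite !(enum_val_nth x0).
  by apply: (sorted_ltn_nth lt_trans x0 sorted_enum_set); rewrite ?inE ?size_enum_set.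
apply/idP/idP; last exact: mono.
case: (ltngtP a b) => // [ba|/val_inj ->]; last by rewrite ltnn.
by move=> ab; have := mono _ _ ba; rewrite ltnNge (ltnW ab).
Qed.

Lemma nth_map_enum_val (F : 'I_n -> nat) (a : 'I_#|Y|) :
  nth 0 (map F (enum Y)) a = F (enum_val a).
Proof. by rewrite (nth_map (enum_val a)) ?size_enum_set // -enum_val_nth. Qed.

Lemma index_enum_val (a : 'I_#|Y|) : index (enum_val a) (enum Y) = a.
Proof.
by rewrite (enum_val_nth (enum_val a)) index_uniq ?enum_uniq ?size_enum_set.
Qed.

Lemma index_enum_set_lt i : i \in Y -> index i (enum Y) < #|Y|.
Proof. by move=> iY; rewrite -size_enum_set index_mem mem_enum. Qed.

Lemma enum_val_img : [set enum_val a | a in 'I_#|Y|] = Y.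
Proof.
apply/setP => x; apply/imsetP/idP => [[a _ ->]|xY]; first exact: enum_valP.
by exists (enum_rank_in xY x); rewrite ?enum_rankK_in.
Qed.

End EnumSet.

Lemma map_nth_index (T : eqType) (e : seq T) (s : seq nat) :
  uniq e -> size s = size e -> map (fun x => nth 0 s (index x e)) e = s.
Proof.
move=> ue sz; apply: (@eq_from_nth _ 0); first by rewrite size_map sz.
move=> i; rewrite size_map => ie; case: e ue sz ie => [//|x0 e'] ue sz ie.
by rewrite (nth_map x0) // index_uniq.
Qed.

Lemma word_wvalE n g : size g = n -> g = map (@wval g n) (enum 'I_n).
Proof.
move=> size_g; apply: (@eq_from_nth _ 0) => [|i]; first by rewrite size_map size_enum_ord.
rewrite size_g => ilt.
by rewrite (nth_map (Ordinal ilt)) ?size_enum_ord // /wval nth_enum_ord.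
Qed.

Lemma filter_wvalE n g (P : pred nat) : size g = n ->
  [seq x <- g | P x] = map (@wval g n) (enum [set i : 'I_n | P (wval g i)]).
Proof.
move=> size_g; rewrite {1}(word_wvalE size_g) filter_map enum_setE; congr map.
by apply: eq_filter => i; rewrite !inE.
Qed.

Section Cut.

Variables (K : fieldType) (q1 q2 q3 : K).
Variables (n : nat) (T : {set {set 'I_n}}) (O : {set 'I_n}) (g u v : seq nat).
Hypothesis OT : O \in T.
Hypotheses (size_g : size g = n) (pg : packed g) (pu : packed u) (pv : packed v).
Hypotheses (uE : u = map (@wval g n) (enum (~: O))) (size_v : size v = #|O|).
Hypothesis leq_v : forall a b : 'I_#|O|,
  (wval v a <= wval v b) = (wval g (enum_val a) <= wval g (enum_val b)).
Hypothesis lt_cut : forall i j : 'I_n, i \notin O -> j \in O -> wval g i < wval g j.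

Lemma Gamma_cut :
  Gamma q1 q2 q3 T g = (Gamma q1 q2 q3 (stdres T (~: O)) u * Gamma q1 q2 q3 (stdres T O) v)%R.
Proof.
have leq_u (a b : 'I_#|~: O|) :
    (wval u a <= wval u b) = (wval g (enum_val a) <= wval g (enum_val b)).
  by rewrite /wval uE !nth_map_enum_val.
have compl : ~: [set enum_val a | a in 'I_#|~: O|] = [set enum_val b | b in 'I_#|O|].
  by rewrite !enum_val_img setCK.
have leT_u a b : leT (stdres T (~: O)) a b = leT T (enum_val a) (enum_val b).
  exact: leT_stdres.
have leT_v a b : leT (stdres T O) a b = leT T (enum_val a) (enum_val b).
  exact: leT_stdres.
have same_side (i j : 'I_n) : wval g i = wval g j ->
    (i \in [set enum_val a | a in 'I_#|~: O|]) = (j \in [set enum_val a | a in 'I_#|~: O|]).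
  rewrite enum_val_img !inE => e.
  by case: (boolP (i \in O)) => iO; case: (boolP (j \in O)) => jO //;
    [have := lt_cut jO iO | have := lt_cut iO jO]; rewrite e ltnn.
have split := weight_split (enum_val_mono (Y := ~: O)) (enum_val_mono (Y := O)) compl
  leT_u leT_v leq_u leq_v (fun i j _ => same_side i j)
  (fun i j k _ _ ij jk => conj (same_side _ _ ij) (same_side _ _ jk)).
rewrite !GammaE !is_TpartitionE size_g uE size_map size_enum_set size_v -uE.
rewrite pg pu pv !eqxx /= (Tmonotone_split compl leT_u leT_v leq_u leq_v); last first.
  rewrite enum_val_img => i j; rewrite !inE.
  case: (boolP (i \in O)) => iO; case: (boolP (j \in O)) => jO //= _.
    by move/forallP/(_ O); rewrite OT iO (negbTE jO).
  by move=> _; apply/ltnW/lt_cut.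
case: (Tmonotone _ u); last by rewrite mul0r.
by case: (Tmonotone _ v); rewrite ?split ?mulr0.
Qed.

End Cut.

(* [glue_words O u v] places [u] on the complement of [O] and [v], shifted
   above all letters of [u], on [O]; it inverts the cut of a word along an up-set. *)
Definition glue_words n (O : {set 'I_n}) (u v : seq nat) : seq nat :=
  [seq if i \in O then nth 0 v (index i (enum O)) + maxw u
       else nth 0 u (index i (enum (~: O))) | i <- enum 'I_n].

Section GlueWords.

Variables (n : nat) (O : {set 'I_n}) (u v : seq nat).
Hypotheses (pu : packed u) (pv : packed v).
Hypotheses (size_u : size u = #|~: O|) (size_v : size v = #|O|).

Let g := glue_words O u v.
Let k := maxw u.

Lemma size_glue_words : size g = n.
Proof. by rewrite size_map size_enum_ord. Qed.

Let wval_in i : i \in O -> wval g i = nth 0 v (index i (enum O)) + k.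
Proof. by move=> iO; rewrite /wval (nth_map i) ?size_enum_ord // nth_ord_enum iO. Qed.

Let wval_notin i : i \notin O -> wval g i = nth 0 u (index i (enum (~: O))).
Proof.
by move=> iO; rewrite /wval (nth_map i) ?size_enum_ord // nth_ord_enum (negbTE iO).
Qed.

Let nth_v_in i : i \in O -> nth 0 v (index i (enum O)) \in v.
Proof. by move=> iO; rewrite mem_nth // size_v index_enum_set_lt. Qed.

Let nth_u_in i : i \notin O -> nth 0 u (index i (enum (~: O))) \in u.
Proof. by move=> iO; rewrite mem_nth // size_u index_enum_set_lt // inE. Qed.

Lemma glue_words_notin_bounds i : i \notin O -> 0 < wval g i <= k.
Proof. by move=> iO; rewrite wval_notin // packed_mem_bounds ?nth_u_in. Qed.

Lemma glue_words_in_gt i : i \in O -> k < wval g i.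
Proof. by move=> iO; rewrite wval_in //; have := packed_mem_bounds pv (nth_v_in iO); lia. Qed.

Lemma glue_words_lt_cut i j : i \notin O -> j \in O -> wval g i < wval g j.
Proof.
by move=> iO jO; have := glue_words_notin_bounds iO; have := glue_words_in_gt jO; lia.
Qed.

Lemma glue_words_upset : [set i | k < wval g i] = O.
Proof.
apply/setP => i; rewrite inE; case: (boolP (i \in O)) => iO.
  exact: glue_words_in_gt.
by rewrite ltnNge; have /andP[_ ->] := glue_words_notin_bounds iO.
Qed.

Lemma glue_words_compl : u = map (@wval g n) (enum (~: O)).
Proof.
rewrite -[LHS](map_nth_index (enum_uniq (mem (~: O)))) ?size_enum_set //.
by apply/eq_in_map => i; rewrite mem_enum inE => iO; rewrite wval_notin.
Qed.

Lemma glue_words_leq_in (a b : 'I_#|O|) :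
  (wval v a <= wval v b) = (wval g (enum_val a) <= wval g (enum_val b)).
Proof. by rewrite !wval_in ?enum_valP // !index_enum_val leq_add2r. Qed.

Lemma glue_words_filter_gt : [seq x <- g | k < x] = map (addn^~ k) v.
Proof.
rewrite (filter_wvalE _ size_glue_words) glue_words_upset.
rewrite -[in RHS](map_nth_index (enum_uniq (mem O)) (s := v)) ?size_enum_set //.
by rewrite -map_comp; apply/eq_in_map => i; rewrite mem_enum => iO /=; rewrite wval_in.
Qed.

Lemma glue_words_filter_le : [seq x <- g | x <= k] = u.
Proof.
have lowO : [set i | wval g i <= k] = ~: O.
  by apply/setP => i; rewrite !inE leqNgt -glue_words_upset inE.
by rewrite (filter_wvalE _ size_glue_words) lowO -glue_words_compl.
Qed.

Lemma glue_words_packed : packed g.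
Proof.
apply/packedP; split=> [x|x /andP[x0 xm]].
  rewrite (word_wvalE size_glue_words) => /mapP[i _ ->].
  by case: (boolP (i \in O)) => [/glue_words_in_gt|/glue_words_notin_bounds]; lia.
have [xk|kx] := leqP x k.
  have : x \in [seq x <- g | x <= k].
    by rewrite glue_words_filter_le; case/packedP: pu => _ ->; rewrite ?x0.
  by rewrite mem_filter => /andP[].
have mg : maxw g <= maxw v + k.
  apply/bigmax_leqP_seq => y; rewrite (word_wvalE size_glue_words) => /mapP[i _ ->] _.
  case: (boolP (i \in O)) => iO; last by have := glue_words_notin_bounds iO; lia.
  by rewrite wval_in // leq_add2r leq_maxw ?nth_v_in.
have : x \in [seq x <- g | k < x].
  rewrite glue_words_filter_gt; apply/mapP; exists (x - k); last lia.
  by case/packedP: pv => _ -> //; lia.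
by rewrite mem_filter => /andP[].
Qed.

End GlueWords.

Lemma pack_addn v k : packed v -> pack (map (addn^~ k) v) = v.
Proof.
move=> pv; apply: packed_eq; rewrite ?pack_packed ?size_pack ?size_map // => i j iv jv.
by rewrite nth_pack_leq ?size_map // !(nth_map 0) // leq_add2r.
Qed.

Section CutWord.

Variables (n : nat) (g : seq nat) (k : nat).
Hypotheses (pg : packed g) (size_g : size g = n) (k_le : k <= maxw g).

Let O := [set i : 'I_n | k < wval g i].
Let u := [seq x <- g | x <= k].
Let v := pack [seq x <- g | k < x].

Lemma cut_lowE : u = map (@wval g n) (enum (~: O)).
Proof.
have lowO : [set i | wval g i <= k] = ~: O by apply/setP => i; rewrite !inE leqNgt.
by rewrite /u (filter_wvalE _ size_g) lowO.
Qed.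

Lemma cut_highE : [seq x <- g | k < x] = map (@wval g n) (enum O).
Proof. exact: filter_wvalE. Qed.

Lemma size_cut_high : size v = #|O|.
Proof. by rewrite size_pack cut_highE size_map size_enum_set. Qed.

Lemma cut_high_leq (a b : 'I_#|O|) :
  (wval v a <= wval v b) = (wval g (enum_val a) <= wval g (enum_val b)).
Proof.
by rewrite /wval nth_pack_leq cut_highE ?size_map ?size_enum_set // !nth_map_enum_val.
Qed.

Lemma cut_lt i j : i \notin O -> j \in O -> wval g i < wval g j.
Proof. by rewrite !inE -leqNgt; apply: leq_ltn_trans. Qed.

Lemma cut_low_packed : packed u /\ maxw u = k.
Proof.
have [pos full] := packedP _ pg.
have mle : maxw u <= k by apply/bigmax_leqP_seq => x; rewrite mem_filter => /andP[].
have mge : k <= maxw u.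
  rewrite /u; case: k k_le mle => [//|k'] km _; apply: leq_maxw.
  by rewrite mem_filter leqnn full.
split; last by apply/eqP; rewrite eqn_leq mle mge.
apply/packedP; split=> [x|j /andP[j0 jm]]; first by rewrite mem_filter => /andP[_ /pos].
rewrite mem_filter (leq_trans jm mle) full // j0.
exact: leq_trans jm (leq_trans mle k_le).
Qed.

Lemma pack_cut_high : v = map (subn^~ k) [seq x <- g | k < x].
Proof.
have [_ full] := packedP _ pg.
rewrite /v packE; apply/eq_in_map => x; rewrite mem_filter => /andP[kx xg].
suff P : perm_eq (undup [seq y <- [seq x0 <- g | k < x0] | y <= x]) (iota k.+1 (x - k)).
  by rewrite /letter_rank (perm_size P) size_iota.
apply: uniq_perm; [exact: undup_uniq | exact: iota_uniq |] => z.
rewrite mem_undup !mem_filter mem_iota.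
apply/andP/andP => [[zx /andP[kz _]]|[kz zx]]; first by split => //; lia.
have zx' : z <= x by lia.
split => //; apply/andP; split=> //.
by apply: full; have := leq_maxw xg; lia.
Qed.

Lemma cut_glue : g = glue_words O u v.
Proof.
have [_ maxu] := cut_low_packed.
rewrite {1}(word_wvalE size_g) /glue_words maxu; apply/eq_map => i.
case: ifP => iO.
  rewrite pack_cut_high cut_highE (nth_map 0) ?size_map ?size_enum_set ?index_enum_set_lt //.
  rewrite (nth_map i) ?size_enum_set ?index_enum_set_lt // nth_index ?mem_enum // subnK //.
  by apply: ltnW; move: iO; rewrite inE.
have iO' : i \in ~: O by rewrite inE iO.
rewrite cut_lowE (nth_map i) ?size_enum_set ?index_enum_set_lt //.
by rewrite nth_index ?mem_enum.
Qed.

Lemma cut_open (T : {set {set 'I_n}}) : is_topology T -> Tmonotone T g -> O \in T.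
Proof.
move=> topT /forallP mon; apply: upset_open => // i j; rewrite !inE => ki ij.
by apply: leq_trans ki _; have /implyP := forallP (mon i) j; apply.
Qed.

End CutWord.

Section Coproduct.

Local Open Scope ring_scope.
Variables (K : fieldType) (q1 q2 q3 : K) (n : nat) (T : {set {set 'I_n}}).
Hypothesis topT : is_topology T.
Variables (u v : seq nat).
Notation G := (Gamma q1 q2 q3).

(* The terms of [wcoprod] are indexed by a word and a cut level [k]. *)
Definition cut_ok (p : n.-tuple 'I_n.+1 * 'I_n.+1) :=
  [&& packed (toword p.1), (p.2 <= maxw (toword p.1))%N,
      [seq x <- toword p.1 | (x <= p.2)%N] == u &
      pack [seq x <- toword p.1 | (p.2 < x)%N] == v].

Definition cut_term p := if cut_ok p then G T (toword p.1) else 0.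

Definition cut_upset (p : n.-tuple 'I_n.+1 * 'I_n.+1) :=
  [set i : 'I_n | (p.2 < wval (toword p.1) i)%N].

Definition open_term (O : {set 'I_n}) := G (stdres T (~: O)) u * G (stdres T O) v.

Lemma wcoprod_cut_terms : wcoprod n (G T) u v = \sum_p cut_term p.
Proof.
rewrite /wcoprod -(pair_big xpredT xpredT (fun t k => cut_term (t, k))) /=.
apply: eq_bigr => t _; rewrite -/(toword t).
case pg: (packed (toword t)); last by rewrite big1 // => k _; rewrite /cut_term /cut_ok pg.
have mn : ((maxw (toword t)).+1 <= n.+1)%N.
  by rewrite ltnS -{2}(size_toword t) maxw_le_size.
rewrite big_mkord (big_ord_widen _ (fun k : nat =>
  ((([seq x <- toword t | (x <= k)%N] == u) &&
   (pack [seq x <- toword t | (k < x)%N] == v))%:R : K)) mn) mulr_sumr big_mkcond /=.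
apply: eq_bigr => k _; rewrite /cut_term /cut_ok /= pg /= ltnS.
case: (k <= maxw (toword t))%N => //=.
by case: (_ && _); rewrite ?mulr1 ?mulr0.
Qed.

Lemma cut_term_neq0 p : cut_term p != 0 ->
  [/\ cut_upset p \in T, cut_term p = open_term (cut_upset p),
      toword p.1 = glue_words (cut_upset p) u v & val p.2 = maxw u].
Proof.
rewrite /cut_term; case ok: (cut_ok p); last by rewrite eqxx.
case/Gamma_neq0_Tpartition/and3P => _ _ mon.
case/and4P: ok => pg k_le /eqP lowE /eqP highE.
have size_g := size_toword p.1.
have [pu maxu] := cut_low_packed pg k_le.
have OT := cut_open p.2 topT mon.
have gE := cut_glue pg size_g k_le.
rewrite lowE in maxu; rewrite lowE highE in gE.
split=> //; rewrite /open_term -highE -lowE.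
exact: Gamma_cut OT size_g pg pu (pack_packed _) (cut_lowE _ size_g)
  (size_cut_high _ size_g) (cut_high_leq size_g) (@cut_lt _ _ _).
Qed.

Lemma cut_upset_inj p p' : cut_term p != 0 -> cut_term p' != 0 ->
  cut_upset p = cut_upset p' -> p = p'.
Proof.
case/cut_term_neq0 => _ _ e1 k1 /cut_term_neq0[_ _ e2 k2] eO.
case: p p' e1 e2 k1 k2 eO => [t k] [t' k'] /= e1 e2 k1 k2 eO.
rewrite eO -e2 in e1; rewrite (toword_inj e1).
by congr pair; apply: val_inj; rewrite /= k1 k2.
Qed.

Lemma open_term_neq0 O : O \in T -> open_term O != 0 ->
  exists p, cut_upset p = O /\ cut_term p = open_term O.
Proof.
move=> OT; rewrite /open_term mulf_eq0 negb_or.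
case/andP=> /Gamma_neq0_Tpartition/and3P[/eqP size_u pu _].
case/Gamma_neq0_Tpartition/and3P=> [/eqP size_v pv _].
set g := glue_words O u v.
have size_g : size g = n := size_glue_words O u v.
have pg : packed g := glue_words_packed pu pv size_u size_v.
have lowE := glue_words_filter_le pu pv size_u size_v.
have k_le : (maxw u <= maxw g)%N.
  apply/bigmax_leqP_seq => x xu _; apply: leq_maxw.
  by move: xu; rewrite -{1}lowE mem_filter => /andP[].
have k_lt : (maxw u < n.+1)%N by rewrite ltnS -size_g (leq_trans k_le) ?maxw_le_size.
have [t tg] := toword_packed size_g pg.
exists (t, Ordinal k_lt); split.
  by rewrite /cut_upset /= tg; apply: glue_words_upset.
rewrite /cut_term /cut_ok /= tg pg k_le lowE.
rewrite (glue_words_filter_gt pu pv size_u size_v) pack_addn // !eqxx.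
exact: Gamma_cut OT size_g pg pu pv (glue_words_compl v size_u) size_v
  (glue_words_leq_in u v) (glue_words_lt_cut pu pv size_u size_v).
Qed.

Lemma sum_cut_terms_upset O :
  \sum_p (if cut_upset p == O then cut_term p else 0) = if O \in T then open_term O else 0.
Proof.
case: (pickP (fun p => (cut_upset p == O) && (cut_term p != 0))) =>
    [p0 /andP[/eqP e0 nz0]|none].
  have [OT ph _ _] := cut_term_neq0 nz0; rewrite e0 in OT ph; rewrite OT.
  rewrite (bigD1 p0) //= e0 eqxx big1 ?addr0 // => p np.
  case: eqP => // ep; apply/eqP; apply: contraR np => nz.
  by apply/eqP; apply: cut_upset_inj => //; rewrite ep e0.
rewrite big1 => [|p _]; last first.
  by case: eqP => // ep; apply/eqP; have := none p; rewrite ep eqxx /= => /negbFE.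
case OT: (O \in T) => //; apply/esym/eqP/negP => /negP nz.
by have [p [ep ph]] := open_term_neq0 OT nz; have := none p; rewrite /= ep ph eqxx nz.
Qed.

Lemma wcoprod_Gamma : wcoprod n (G T) u v = \sum_(O in T) open_term O.
Proof.
rewrite wcoprod_cut_terms [RHS]big_mkcond /=.
under [RHS]eq_bigr => O _ do rewrite -sum_cut_terms_upset.
rewrite exchange_big /=; apply: eq_bigr => p _.
rewrite (bigD1 (cut_upset p)) //= eqxx big1 ?addr0 // => O /negbTE nO.
by rewrite eq_sym nO.
Qed.

End Coproduct.

Local Open Scope ring_scope.

Theorem proposition14 (K : fieldType) (q1 q2 q3 : K) :
  [/\
   (* homogeneous *)
   (forall (n : nat) (T : {set {set 'I_n}}), is_topology T ->
      forall g : seq nat, Gamma q1 q2 q3 T g != 0 -> size g = n),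
   (* bialgebra (hence Hopf algebra) morphism *)
   [/\
     (* unit *)
     (forall g : seq nat, Gamma q1 q2 q3 unitT g = (g == [::])%:R),
     (* product *)
     (forall (n n' : nat) (T : {set {set 'I_n}}) (T' : {set {set 'I_n'}}),
        is_topology T -> is_topology T' ->
        forall g : seq nat,
          Gamma q1 q2 q3 (tprod T T') g
          = wprod (Gamma q1 q2 q3 T) (Gamma q1 q2 q3 T') g),
     (* counit *)
     (forall (n : nat) (T : {set {set 'I_n}}), is_topology T ->
        wcounit (Gamma q1 q2 q3 T) = (n == 0)%:R)
     &
     (* coproduct *)
     (forall (n : nat) (T : {set {set 'I_n}}), is_topology T ->
        forall u v : seq nat,
          wcoprod n (Gamma q1 q2 q3 T) u v
          = \sum_(O in T) Gamma q1 q2 q3 (stdres T (~: O)) u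
                          * Gamma q1 q2 q3 (stdres T O) v)],
   (* surjective *)
   (forall (n : nat) (f : seq nat), size f = n -> packed f ->
      exists c : {set {set 'I_n}} -> K,
        (forall T, c T != 0 -> is_topology T) /\
        (forall g : seq nat,
           \sum_(T : {set {set 'I_n}}) c T * Gamma q1 q2 q3 T g
           = (g == f)%:R))
   &
   (* j o Gamma_(q2,q1,q3) = Gamma_(q1,q2,q3) o iota *)
   (forall (n : nat) (T : {set {set 'I_n}}), is_topology T ->
      forall g : seq nat,
        jmap (Gamma q2 q1 q3 T) g = Gamma q1 q2 q3 (iotaT T) g)].
Proof.
split.
- by move=> n T _ g; apply: size_Gamma_neq0.
- split.
  + exact: Gamma_unitT.
  + exact: Gamma_tprod_wprod.
  + by move=> n T _; apply: wcounit_Gamma.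
  + by move=> n T topT u v; apply: wcoprod_Gamma.
- exact: Gamma_surjective.
- by move=> n T _ g; apply: Gamma_jmap.
Qed.
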